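(* Let $\sqsubset$ be a precedence on a finite signature $\mathcal F$ with rank function $\mathrm{rk}$, and let $(G,l,r)$ be a constructor graph rewrite rule with $G{\restriction}r\sqsubset_{\mathrm{pt}}G{\restriction}l$. Let $G_L\in\mathcal{TG}_{\mathrm{nrm}}(\mathcal F)$ be a closed instance of $G{\restriction}l$ (i.e. a closed term graph with a homomorphism $\psi:G{\restriction}l\to G_L$ mapping $l$ to $\rho_{G_L}$), and let $G_R\in\mathcal{TG}_{\mathrm{nrm}}(\mathcal F)$ be the corresponding closed instance of $G{\restriction}r$ (obtained by instantiating each unlabeled node $x$ of $G{\restriction}r$ with $G_L{\restriction}\psi(x)$, i.e. the result of rewriting $G_L$ at its root with the redex $((G,l,r),\psi)$). If $|G{\restriction}r|\le\ell$ for a positive integer $\ell$, then $\pi_\ell(G_R)<\pi_\ell(G_L)$.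
   Context: Term graphs. $\mathcal F=\mathcal C\cup\mathcal D$ is a finite signature (constructors and defined symbols, disjoint) with arity function $\mathrm{ar}$. A labeled graph consists of a finite acyclic directed graph $(V_G,E_G)$, a partial labeling $\mathrm{lab}_G:V_G\to\mathcal F$ and a successor function $\mathrm{att}_G:V_G\to V_G^*$ such that $\mathrm{att}_G(v)$ has length $\mathrm{ar}(\mathrm{lab}_G(v))$ if $v$ is labeled and is empty otherwise, and the set of entries of $\mathrm{att}_G(v)$ equals $\{u:(v,u)\in E_G\}$. Unlabeled nodes act as variables. A term graph additionally has a root $\rho_G$ from which every node is reachable; $\mathcal{TG}(\mathcal C)$ denotes term graphs whose labeled nodes carry constructors. $G{\restriction}v$ is the sub-term graph of nodes reachable from $v$; $H\subseteq G$ means $H=G{\restriction}v$ for some $v$. $|G|=|V_G|$. $\mathrm{depth}(G)$ is the length of a longest path from $\rho_G$. $G$ is closed if every node is labeled; basic if $\mathrm{lab}_G(\rho_G)\in\mathcal D$ and $G{\restriction}v\in\mathcal{TG}(\mathcal C)$ for every successor $v$ of $\rho_G$. Homomorphisms preserve labels, successor sequences (at labeled nodes only) and the normal/safe split. A graph rewrite rule $(K,l,r)$ is a labeled graph with distinct nodes $l,r$, every unlabeled node of $K{\restriction}r$ lying in $K{\restriction}l$; it is a constructor rule if $K{\restriction}l$ is basic. Argument separation. The argument positions of each $f\in\mathcal F$ are split into normal and safe ones; constructors have only safe positions; nodes with the same label have the same separation. $\mathrm{nrm}(v)$ (resp. $\mathrm{safe}(v)$) is the set of successors of $v$ at normal (resp.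 safe) positions. $H\sqsubset_{\mathrm{nrm}}G$ means $H\subseteq G{\restriction}v$ for some $v\in\mathrm{nrm}(\rho_G)$. Precedence. A precedence $\sqsubset$ is a well-founded strict partial order on $\mathcal F$ with all constructors minimal, with a rank function $\mathrm{rk}:\mathcal F\to\mathbb N$ compatible with it ($g\sqsubset f$ implies $\mathrm{rk}(g)<\mathrm{rk}(f)$). $H\sqsubset_{\mathrm{pt}}G$ holds if $\mathrm{lab}_H(v)\sqsubset\mathrm{lab}_G(\rho_G)$ for every labeled node $v$ of $H$ and either (1) $H=G{\restriction}u$ or $H\sqsubset_{\mathrm{pt}}G{\restriction}u$ for some successor $u$ of $\rho_G$; or (2) $\rho_H$ is labeled, $H{\restriction}v\sqsubset_{\mathrm{nrm}}G$ for each $v\in\mathrm{nrm}(\rho_H)$, and $H{\restriction}v\sqsubset_{\mathrm{pt}}G$ for each $v\in\mathrm{safe}(\rho_H)$. Safe paths and $\mathcal{TG}_{\mathrm{nrm}}$. A path is safe if each next node is a safe successor of the previous one; $\mathrm{SP}_G(v)$ is the set of nodes lying on a safe path from $v$ (including $v$), and $\mathrm{SP}_G=\mathrm{SP}_G(\rho_G)$. $G\in\mathcal{TG}_{\mathrm{nrm}}(\mathcal F)$ iff $G\in\mathcal{TG}(\mathcal C)$, or $G{\restriction}v\in\mathcal{TG}(\mathcal C)$ for all $v\in\mathrm{nrm}(\rho_G)$ and $G{\restriction}v\in\mathcal{TG}_{\mathrm{nrm}}(\mathcal F)$ for all $v\in\mathrm{safe}(\rho_G)$. Interpretation. For a positive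 integer $\ell$ and a closed term graph $G$ with labeled root, let $\mathrm{pj}_\ell(G)=(1+\ell)^{2\,\mathrm{rk}(\mathrm{lab}_G(\rho_G))}\cdot\big(1+\sum_{u\in\mathrm{nrm}(\rho_G)}\mathrm{depth}(G{\restriction}u)\big)$, and for $G\in\mathcal{TG}_{\mathrm{nrm}}(\mathcal F)$ closed let $\pi_\ell(G)=\sum\{\mathrm{pj}_\ell(G{\restriction}v) : v\in\mathrm{SP}_G,\ G{\restriction}v\notin\mathcal{TG}(\mathcal C)\}$ (so $\pi_\ell(G)=0$ if $G\in\mathcal{TG}(\mathcal C)$). *)

From mathcomp Require Import all_boot.
Set Implicit Arguments.
Unset Strict Implicit.
Unset Printing Implicit Defensive.

(* [is_defined f] : f is a defined symbol (in D); otherwise a constructor (in C).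
   [is_normal f i] : argument position i (0-based, i < ar f) of f is normal;
   otherwise it is safe. *)
Record signature := Signature {
  sym : finType;
  ar : sym -> nat;
  is_defined : pred sym;
  is_normal : sym -> pred nat;
  constr_no_normal : forall f i, ~~ is_defined f -> i < ar f -> ~~ is_normal f i
}.

Record precedence (S : signature) := Precedence {
  prec : rel (sym S);                       (* prec g f  <->  g ⊏ f *)
  rk : sym S -> nat;
  prec_irr : irreflexive prec;
  prec_trans : transitive prec;
  prec_wf : well_founded (fun g f => prec g f);
  prec_constr_min : forall c g, ~~ is_defined c -> ~~ prec g c;
  rk_compat : forall g f, prec g f -> rk g < rk f
}.

(* Unlabeled nodes (lab = None) act as variables.  The edge set is the set of
   entries of the successor lists. *)
Record lgraph (S : signature) := LGraph {
  node : finType;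
  lab : node -> option (sym S);
  att : node -> seq node
}.

Section Graphs.
Variable S : signature.

Section OneGraph.
Variable G : lgraph S.

Definition edge : rel (node G) := fun v u => u \in att v.
(* u is a node of the sub-term graph G|v *)
Definition reach (v u : node G) : bool := connect edge v u.

Definition lgraph_wf : Prop :=
  (forall v : node G, size (att v) = if lab v is Some f then ar f else 0) /\
  (forall v u, u \in att v -> ~~ reach u v).

Definition term_graph (rho : node G) : Prop :=
  lgraph_wf /\ forall v, reach rho v.

Definition closed_at (v : node G) : Prop :=
  forall u, reach v u -> lab u <> None.

Definition succ_at (Q : sym S -> pred nat) (v : node G) : seq (node G) :=
  if lab v is Some f then
    [seq nth v (att v) i | i <- iota 0 (ar f) & Q f i]
  else [::].
Definition nrm (v : node G) := succ_at (@is_normal S) v.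
Definition safe (v : node G) := succ_at (fun f i => ~~ is_normal f i) v.

Definition constr_lab (o : option (sym S)) : bool :=
  if o is Some f then ~~ is_defined f else true.

Definition constr_tg (v : node G) : bool :=
  [forall u, reach v u ==> constr_lab (lab u)].

Inductive tg_nrm : node G -> Prop :=
| tg_nrm_constr v : constr_tg v -> tg_nrm v
| tg_nrm_sep v :
    (forall u, u \in nrm v -> constr_tg u) ->
    (forall u, u \in safe v -> tg_nrm u) -> tg_nrm v.

Definition basic (v : node G) : Prop :=
  (exists2 f, lab v = Some f & is_defined f) /\
  (forall u, u \in att v -> constr_tg u).

Definition nrm_below (h g : node G) : Prop :=
  exists2 v, v \in nrm g & reach v h.

Section Pt.
Variable P : precedence S.

Definition prec_below (h g : node G) : Prop :=
  forall w, reach h w -> forall f, lab w = Some f ->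
    exists2 f0, lab g = Some f0 & prec P f f0.

Inductive pt : node G -> node G -> Prop :=
| pt_sub h g u :
    prec_below h g -> u \in att g -> (h = u \/ pt h u) -> pt h g
| pt_sep h g f :
    prec_below h g -> lab h = Some f ->
    (forall v, v \in nrm h -> nrm_below v g) ->
    (forall v, v \in safe h -> pt v g) -> pt h g.

(* depth: length of a longest path; paths in an acyclic graph have length
   < #|node G|, so the bounded recursion below computes it exactly. *)
Fixpoint depth_upto (n : nat) (v : node G) : nat :=
  if n is n'.+1 then \max_(u <- att v) (depth_upto n' u).+1 else 0.
Definition depth (v : node G) : nat := depth_upto #|node G| v.

Definition size_at (v : node G) : nat := #|[set u | reach v u]|.

Definition safe_edge : rel (node G) := fun v u => u \in safe v.
Definition SP (v : node G) : {set node G} := [set u | connect safe_edge v u].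

Definition rk_at (v : node G) : nat :=
  if lab v is Some f then rk P f else 0.

Definition pj (ell : nat) (v : node G) : nat :=
  (1 + ell) ^ (2 * rk_at v) * (1 + \sum_(u | u \in nrm v) depth u).

Definition pi_l (ell : nat) (rho : node G) : nat :=
  \sum_(v | (v \in SP rho) && ~~ constr_tg v) pj ell v.

End Pt.
End OneGraph.

Definition constructor_rule (K : lgraph S) (l r : node K) : Prop :=
  lgraph_wf K /\ l != r /\
  (forall x, reach r x -> lab x = None -> reach l x) /\
  basic l.

Definition hom (K GL : lgraph S) (l : node K) (psi : node K -> node GL) : Prop :=
  forall v, reach l v -> forall f, lab v = Some f ->
    lab (psi v) = Some f /\ att (psi v) = map psi (att v).

(* Instantiation of K|r by psi: labeled nodes of K are kept, edges into an
   unlabeled node x are redirected to psi x in GL (sharing preserved). *)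
Section Inst.
Variables (K GL : lgraph S) (psi : node K -> node GL).

Definition redirect (x : node K) : (node K + node GL)%type :=
  if lab x is Some _ then inl x else inr (psi x).

Definition inst_lab (x : (node K + node GL)%type) : option (sym S) :=
  match x with inl v => lab v | inr u => lab u end.

Definition inst_att (x : (node K + node GL)%type) : seq (node K + node GL)%type :=
  match x with
  | inl v => map redirect (att v)
  | inr u => map inr (att u)
  end.

Definition inst : lgraph S := @LGraph S (node K + node GL)%type inst_lab inst_att.
End Inst.

End Graphs.

From mathcomp Require Import all_boot zify.

(* The root of G_L contributes (1 + ℓ)^(2 rk(l)) (1 + D) to pi_ℓ(G_L), where D
   is the sum of the depths of its normal arguments.  A node on a safe path of
   G_R is either a node of G_L, which is then a constructor graph or lies on a
   safe path of G_L strictly below its root, so all of these together weigh at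
   most pi_ℓ(G_L) minus the root's share; or it is one of the at most ℓ
   labeled nodes of G|r.  Since G|r is pt-below G|l, such a node has rank
   < rk(l), and each of its (at most ℓ) normal arguments is instantiated below
   a normal argument of the root of G_L, hence has depth <= D.  Their total
   weight is at most ℓ (1 + ℓ)^(2 (rk(l) - 1)) (1 + ℓ D) < (1 + ℓ)^(2 rk(l)) (1 + D). *)

Set Implicit Arguments.
Unset Strict Implicit.
Unset Printing Implicit Defensive.

Section LabeledGraph.
Variables (S : signature) (G : lgraph S).
Implicit Types (u v w : node G) (Q : sym S -> pred nat).

Lemma reach_refl v : reach v v.
Proof. exact: connect0. Qed.

Definition arity_ok v : Prop :=
  size (att v) = if lab v is Some f then ar f else 0.

Lemma mem_succ_at_att Q v u : arity_ok v -> u \in succ_at Q v -> u \in att v.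
Proof.
rewrite /succ_at /arity_ok; case: (lab v) => [f|//] size_att.
case/mapP => i; rewrite mem_filter mem_iota => /and3P[_ _ lt_i] ->.
by apply: mem_nth; rewrite size_att.
Qed.

Lemma att_labeled v u : arity_ok v -> u \in att v -> exists f, lab v = Some f.
Proof.
rewrite /arity_ok; case: (lab v) => [f|] size_att vu; first by exists f.
by move/eqP: size_att; rewrite size_eq0 => /eqP att_nil; rewrite att_nil in vu.
Qed.

Lemma mem_att_nrm_safe v u : arity_ok v -> u \in att v -> (u \in nrm v) || (u \in safe v).
Proof.
move=> ok_v vu; have [f lab_v] := att_labeled ok_v vu.
move: ok_v; rewrite /arity_ok /nrm /safe /succ_at lab_v => size_att.
have [i lt_i <-] := nthP v vu; rewrite size_att in lt_i.
have iota_i : i \in iota 0 (ar f) by rewrite mem_iota.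
by case: (boolP (is_normal f i)) => Ni; apply/orP; [left|right];
  apply: map_f; rewrite mem_filter Ni.
Qed.

Lemma nrm_constr v f : lab v = Some f -> ~~ is_defined f -> nrm v = [::].
Proof.
rewrite /nrm /succ_at => -> Cf; rewrite (@eq_in_filter _ _ pred0) ?filter_pred0 //.
by move=> i; rewrite mem_iota => /andP[_ lt_i]; apply/negbTE/constr_no_normal.
Qed.

Lemma safe_constr v f : lab v = Some f -> ~~ is_defined f -> arity_ok v -> safe v = att v.
Proof.
rewrite /safe /succ_at /arity_ok => -> Cf size_att.
rewrite (@eq_in_filter _ _ predT) ?filter_predT; last first.
  by move=> i; rewrite mem_iota => /andP[_ lt_i]; apply: constr_no_normal.
by rewrite -size_att -/(mkseq _ _) mkseq_nth.
Qed.

Lemma constr_tg_lab v u : constr_tg v -> reach v u -> constr_lab (lab u).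
Proof. by move=> /forallP/(_ u)/implyP; apply. Qed.

Lemma constr_tg_reach v u : constr_tg v -> reach v u -> constr_tg u.
Proof.
move=> Cv vu; apply/forallP => w; apply/implyP => uw.
exact: constr_tg_lab Cv (connect_trans vu uw).
Qed.

Lemma size_at_gt0 v : 0 < size_at v.
Proof. by apply/card_gt0P; exists v; rewrite inE reach_refl. Qed.

Section Acyclic.
Hypothesis wfG : lgraph_wf G.

Lemma arity_okW v : arity_ok v.
Proof. exact: wfG.1. Qed.

Lemma size_at_att v u : u \in att v -> size_at u < size_at v.
Proof.
move=> vu; apply/proper_card/properP; split.
  by apply/subsetP => x; rewrite !inE; apply: connect_trans (connect1 vu).
by exists v; rewrite !inE ?reach_refl ?(negbTE (wfG.2 _ _ vu)).
Qed.

Lemma depth_upto_stable n m v :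
  size_at v <= n -> size_at v <= m -> depth_upto n v = depth_upto m v.
Proof.
elim: n m v => [|n IHn] [|m] v le_n le_m;
  try by move: (size_at_gt0 v); rewrite ltnNge ?le_n ?le_m.
apply: eq_big_seq => u vu; congr _.+1; have lt_u := size_at_att vu.
by apply: IHn; rewrite -ltnS; apply: leq_trans lt_u _.
Qed.

Lemma depth_uptoE n v : size_at v <= n -> depth_upto n v = depth v.
Proof. by move=> le_n; apply: depth_upto_stable le_n (max_card _). Qed.

Lemma depth_att v u : u \in att v -> depth u < depth v.
Proof.
move=> vu; rewrite -(@depth_uptoE #|node G|.+1 v); last first.
  exact: leq_trans (max_card _) (leqnSn _).
exact: (leq_bigmax_seq _ vu isT).
Qed.

Lemma depth_reach v u : reach v u -> depth u <= depth v.
Proof.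
move=> /connectP[p vp ->]; elim: p v vp => //= w p IHp v /andP[vw wp].
exact: leq_trans (IHp _ wp) (ltnW (depth_att vw)).
Qed.

Lemma SP_reach v u : u \in SP v -> reach v u.
Proof.
rewrite inE => /connect_sub; apply => a b ab; apply: connect1.
exact: mem_succ_at_att (arity_okW a) ab.
Qed.

End Acyclic.

Variable P : precedence S.
Implicit Types h g : node G.

Lemma pt_prec_below h g : pt P h g -> prec_below P h g.
Proof. by case. Qed.

Lemma pt_unlabeled h g : pt P h g -> lab h = None -> exists2 u, u \in att g & reach u h.
Proof.
move: h g; fix IH 3 => h g [{}h {}g u _ gu [->|hu] | {}h {}g f _ hf _ _] hN.
- by exists u; rewrite // reach_refl.
- have [w uw wh] := IH _ _ hu hN.
  by exists u => //; apply: connect_trans (connect1 uw) wh.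
- by rewrite hN in hf.
Qed.

Lemma pt_constr_unlabeled h g : constr_lab (lab g) -> pt P h g -> lab h = None.
Proof.
move=> Cg /pt_prec_below hg; case lab_h: (lab h) => [f|] //.
have [f0 lab_g f_f0] := hg h (reach_refl _) f lab_h.
by move: Cg; rewrite lab_g => /(prec_constr_min P f); rewrite f_f0.
Qed.

Lemma pt_constr_args h g : pt P h g -> (forall u, u \in att g -> constr_tg u) ->
  (exists2 u, u \in att g & reach u h) \/
  (forall v, v \in nrm h -> nrm_below v g) /\ (forall v, v \in safe h -> pt P v g).
Proof.
case=> {h g} [h g u _ gu [->|hu]|h g f _ _ Nh Sh] Cargs; last by right.
  by left; exists u; rewrite // reach_refl.
have C_u := constr_tg_lab (Cargs u gu) (reach_refl u).
left; have [w uw wh] := pt_unlabeled hu (pt_constr_unlabeled C_u hu).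
by exists u => //; apply: connect_trans (connect1 uw) wh.
Qed.

End LabeledGraph.

Lemma succ_at_map (S : signature) (G H : lgraph S) (h : node G -> node H)
    (Q : sym S -> pred nat) (v : node G) (w : node H) :
  lab w = lab v -> arity_ok v -> att w = map h (att v) ->
  succ_at Q w = map h (succ_at Q v).
Proof.
rewrite /succ_at /arity_ok => ->; case: (lab v) => [f|//] size_att att_w.
rewrite -map_comp; apply/eq_in_map => i; rewrite mem_filter mem_iota.
by case/and3P=> _ _ lt_i /=; rewrite att_w (nth_map v) // size_att.
Qed.

Section Homomorphism.
Variables (S : signature) (K G : lgraph S) (l : node K) (psi : node K -> node G).
Hypotheses (wfK : lgraph_wf K) (wfG : lgraph_wf G) (hom_psi : hom l psi).

Lemma hom_reach a b : reach l a -> reach a b -> reach (psi a) (psi b).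
Proof.
move=> la /connectP[p ap ->]; elim: p a la ap => [|c p IHp] a la /=.
  by rewrite reach_refl.
case/andP=> ac cp; have [f lab_a] := att_labeled (arity_okW wfK a) ac.
apply: connect_trans (IHp c (connect_trans la (connect1 ac)) cp).
by apply: connect1; rewrite /edge (hom_psi la lab_a).2 map_f.
Qed.

(* Below a constructor graph every position is safe, so [psi] maps paths to
   safe paths. *)
Lemma hom_safe_path a b : reach l a -> constr_tg a -> reach a b ->
  connect (@safe_edge S G) (psi a) (psi b).
Proof.
move=> la Ca /connectP[p ap ->]; elim: p a la Ca ap => [|c p IHp] a la Ca /=.
  by rewrite connect0.
case/andP=> ac cp; have [f lab_a] := att_labeled (arity_okW wfK a) ac.
have [lab_pa att_pa] := hom_psi la lab_a.
have Cf : ~~ is_defined f by have := constr_tg_lab Ca (reach_refl a); rewrite lab_a.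
apply: connect_trans (IHp c (connect_trans la (connect1 ac)) _ cp); last first.
  exact: constr_tg_reach Ca (connect1 ac).
by apply: connect1; rewrite /safe_edge (safe_constr lab_pa Cf (arity_okW wfG _)) att_pa map_f.
Qed.

End Homomorphism.

Section Instantiation.
Variables (S : signature) (P : precedence S) (K G : lgraph S) (psi : node K -> node G).
Hypotheses (wfK : lgraph_wf K) (wfG : lgraph_wf G).
Notation I := (inst psi).
Implicit Types (k : node K) (g : node G) (Q : sym S -> pred nat).

Lemma succ_at_inl Q k : succ_at (G := I) Q (inl k) = map (redirect psi) (succ_at Q k).
Proof. exact: succ_at_map (arity_okW wfK k) _. Qed.

Lemma succ_at_inr Q g : succ_at (G := I) Q (inr g) = map inr (succ_at Q g).
Proof. exact: succ_at_map (arity_okW wfG g) _. Qed.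

Lemma reach_inr g z : reach (G := I) (inr g) z -> exists2 u, z = inr u & reach g u.
Proof.
move=> /connectP[p gp ->]; elim: p g gp => [|z' p IHp] g /=.
  by exists g; rewrite ?reach_refl.
case/andP=> /mapP[g' gg' ->] g'p; have [u -> g'u] := IHp g' g'p.
by exists u => //; apply: connect_trans (connect1 gg') g'u.
Qed.

Lemma constr_tg_inr g : constr_tg g -> constr_tg (G := I) (inr g).
Proof.
move=> Cg; apply/forallP => z; apply/implyP => /reach_inr[u -> gu].
exact: constr_tg_lab Cg gu.
Qed.

Lemma depth_upto_inr n g : depth_upto (G := I) n (inr g) = depth_upto n g.
Proof. by elim: n g => //= n IHn g; rewrite big_map; apply: eq_bigr => u _; rewrite IHn. Qed.

Lemma depth_inr g : depth (G := I) (inr g) = depth g.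
Proof.
rewrite /depth depth_upto_inr depth_uptoE //.
by rewrite (leq_trans (max_card _)) // card_sum leq_addl.
Qed.

Lemma pj_inr ell g : pj P ell (inr g : node I) = pj P ell g.
Proof.
rewrite /pj /rk_at /nrm succ_at_inr /= big_sumType /= big_pred0 ?add0n; last first.
  by move=> x; apply/negbTE/negP => /mapP[].
congr (_ * (1 + _)); apply: eq_big => [u|u _]; last exact: depth_inr.
by rewrite mem_map // => a b [].
Qed.

Variable l : node K.
Hypothesis hom_psi : hom l psi.

Lemma depth_upto_redirect n x : reach l x ->
  depth_upto (G := I) n (redirect psi x) <= depth_upto n (psi x).
Proof.
elim: n x => // n IHn x lx; rewrite /redirect.
case lab_x: (lab x) => [f|]; last by rewrite depth_upto_inr.
rewrite /= (hom_psi lx lab_x).2 !big_map; apply/bigmax_leqP_seq => y xy _.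
apply: leq_trans (leq_bigmax_seq _ xy isT); rewrite ltnS.
exact: IHn (connect_trans lx (connect1 xy)).
Qed.

Lemma depth_redirect x : reach l x -> depth (G := I) (redirect psi x) <= depth (psi x).
Proof.
move=> lx; apply: leq_trans (depth_upto_redirect _ lx) _.
by rewrite depth_uptoE // (leq_trans (max_card _)) // card_sum leq_addl.
Qed.

End Instantiation.

Lemma rank_gap_lt (e n d : nat) :
  e * ((1 + e) ^ (2 * n) * (1 + e * d)) < (1 + e) ^ (2 * n.+1) * (1 + d).
Proof.
have X_gt0 : 0 < (1 + e) ^ (2 * n) by rewrite expn_gt0.
rewrite mulnS expnD expnS expn1; nia.
Qed.

Section RootRewrite.
Variables (S : signature) (P : precedence S) (K : lgraph S) (l r : node K)
  (GL : lgraph S) (rootL : node GL) (psi : node K -> node GL) (ell : nat).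
Hypotheses (wfK : lgraph_wf K) (wfGL : lgraph_wf GL) (basic_l : basic l)
  (hom_psi : hom l psi) (psi_l : psi l = rootL) (nrm_rootL : tg_nrm rootL)
  (pt_rl : pt P r l).
Notation I := (inst psi).
Local Notation R := (rk_at P l).
Local Notation D := (\sum_(u | u \in nrm rootL) depth u).

Lemma constr_tg_args u : u \in att l -> constr_tg u.
Proof. exact: basic_l.2. Qed.

Lemma lab_rootL : lab rootL = lab l.
Proof. by have [f lab_l _] := basic_l.1; rewrite -psi_l lab_l (hom_psi (reach_refl l) lab_l).1. Qed.

Lemma att_rootL : att rootL = map psi (att l).
Proof. by have [f lab_l _] := basic_l.1; rewrite -psi_l (hom_psi (reach_refl l) lab_l).2. Qed.

Lemma succ_at_rootL Q : succ_at Q rootL = map psi (succ_at Q l).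
Proof. exact: succ_at_map lab_rootL (arity_okW wfK l) att_rootL. Qed.

Lemma rootL_not_constr : ~~ constr_tg rootL.
Proof.
apply/negP => /forallP/(_ rootL); rewrite reach_refl lab_rootL /=.
by have [f -> def_f] := basic_l.1; rewrite /= def_f.
Qed.

Lemma constr_tg_nrm_rootL u : u \in nrm rootL -> constr_tg u.
Proof. by case: nrm_rootL rootL_not_constr => [v -> //|v Nv _ _]; apply: Nv. Qed.

Definition below_args (k : node K) : Prop := exists2 u, u \in att l & reach u k.

Lemma below_args_att k x : below_args k -> x \in att k -> below_args x.
Proof. by case=> u lu uk kx; exists u => //; apply: connect_trans uk (connect1 kx). Qed.

Lemma nrm_below_args k : below_args k -> nrm k = [::].
Proof.
case=> u lu uk; have := constr_tg_lab (constr_tg_args lu) uk.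
by case lab_k: (lab k) => [f|] Cf; [apply: nrm_constr lab_k Cf|rewrite /nrm /succ_at lab_k].
Qed.

(* The nodes of [G_L] that can occur in the safe part of [G_R]: they either
   contribute nothing to [pi_l] or are counted in [pi_l rootL] below its root. *)
Definition safe_tail (g : node GL) : Prop :=
  constr_tg g \/ (g \in SP rootL /\ g != rootL).

Lemma below_args_tail y : below_args y -> safe_tail (psi y).
Proof.
case=> u lu uy; have lu' : reach l u := connect1 lu.
have pu_py := hom_reach wfK hom_psi lu' uy.
have root_pu : psi u \in att rootL by rewrite att_rootL map_f.
have /orP[Nu|Su] := mem_att_nrm_safe (arity_okW wfK l) lu.
  left; apply: constr_tg_reach pu_py; apply: constr_tg_nrm_rootL.
  by rewrite /nrm succ_at_rootL map_f.
right; split.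
  rewrite inE; apply: connect_trans (hom_safe_path wfK wfGL hom_psi lu' (constr_tg_args lu) uy).
  by apply: connect1; rewrite /safe_edge /safe succ_at_rootL map_f.
by apply: contraTneq (wfGL.2 _ _ root_pu) => <-; rewrite negbK.
Qed.

Definition inst_inv (z : node I) : Prop :=
  match z with
  | inl k => [/\ lab k <> None, reach r k & pt P k l \/ below_args k]
  | inr g => safe_tail g
  end.

Lemma inst_inv_redirect x : reach r x -> pt P x l \/ below_args x ->
  inst_inv (redirect psi x).
Proof.
rewrite /redirect; case lab_x: (lab x) => [f|] /= rx ptx; first by rewrite lab_x.
apply: below_args_tail; case: ptx => // ptx; exact: pt_unlabeled ptx lab_x.
Qed.

Lemma inst_inv_safe z z' : inst_inv z -> z' \in safe z -> inst_inv z'.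
Proof.
case: z => [k [_ rk ptk]|g tail_g].
  rewrite /safe succ_at_inl // => /mapP[x kx ->].
  have kx' : x \in att k := mem_succ_at_att (arity_okW wfK k) kx.
  apply: inst_inv_redirect; first exact: connect_trans rk (connect1 kx').
  case: ptk => [ptk|/below_args_att/(_ kx') below_x]; last by right.
  have [/below_args_att/(_ kx') below_x|[_ Sk]] := pt_constr_args ptk constr_tg_args.
    by right.
  by left; apply: Sk.
rewrite /safe succ_at_inr // => /mapP[g' gg' ->] /=.
have gg'' : g' \in att g := mem_succ_at_att (arity_okW wfGL g) gg'.
case: tail_g => [Cg|[SPg ne_g]]; first by left; apply: constr_tg_reach Cg (connect1 gg'').
right; split; first by move: SPg; rewrite !inE => SPg; apply: connect_trans SPg (connect1 gg').
by apply: contraTneq (wfGL.2 _ _ gg'') => ->; rewrite negbK (SP_reach wfGL SPg).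
Qed.

Lemma inst_inv_SP z : z \in SP (G := I) (redirect psi r) -> inst_inv z.
Proof.
rewrite inE => /connectP[p zp ->].
elim: p (redirect psi r) (inst_inv_redirect (reach_refl r) (or_introl pt_rl)) zp
  => [|z' p IHp] z0 inv_z0 //= /andP[z0z' z'p].
exact: IHp (inst_inv_safe inv_z0 z0z') z'p.
Qed.

Lemma rk_lt_rootL k f : reach r k -> lab k = Some f -> rk P f < R.
Proof.
move=> rk lab_k; have [f0 lab_l ff0] := pt_prec_below pt_rl rk lab_k.
by rewrite /rk_at lab_l; apply: rk_compat.
Qed.

Lemma depth_nrm_inl k u : inst_inv (inl k) -> u \in nrm (G := I) (inl k) -> depth u <= D.
Proof.
case=> _ _ ptk; rewrite /nrm succ_at_inl // -/(nrm k) => /mapP[x kx ->].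
have [w lw wx] : nrm_below x l.
  case: ptk => [ptk|/nrm_below_args nrm_k]; last by rewrite nrm_k in kx.
  have [/nrm_below_args nrm_k|[Nk _]] := pt_constr_args ptk constr_tg_args.
    by rewrite nrm_k in kx.
  exact: Nk.
have lw' : reach l w := connect1 (mem_succ_at_att (arity_okW wfK l) lw).
apply: leq_trans (depth_redirect wfGL hom_psi (connect_trans lw' wx)) _.
apply: leq_trans (depth_reach wfGL (hom_reach wfK hom_psi lw' wx)) _.
have nrm_pw : psi w \in nrm rootL by rewrite /nrm succ_at_rootL map_f.
by rewrite (bigD1 (psi w)) //= leq_addr.
Qed.

Lemma card_nrm_inl k : reach r k -> #|nrm (G := I) (inl k)| <= size_at r.
Proof.
move=> rk; apply: leq_trans (leq_imset_card (redirect psi) [set x | reach r x]).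
apply: subset_leq_card; apply/subsetP => u; rewrite /nrm succ_at_inl //.
case/mapP=> x kx ->; apply: imset_f; rewrite inE.
exact: connect_trans rk (connect1 (mem_succ_at_att (arity_okW wfK k) kx)).
Qed.

Lemma pj_inl_le k : inst_inv (inl k) ->
  pj P ell (inl k : node I) <= (1 + ell) ^ (2 * R.-1) * (1 + size_at r * D).
Proof.
move=> inv_k; have [lab_k rk _] := inv_k; apply: leq_mul.
  rewrite leq_pexp2l // leq_mul2l /rk_at /=; case lab_k': (lab k) => [f|] //.
  by rewrite -ltnS (ltn_predK (rk_lt_rootL rk lab_k')) (rk_lt_rootL rk lab_k').
rewrite leq_add2l; apply: (@leq_trans (\sum_(u in nrm (G := I) (inl k)) D)).
  by apply: leq_sum => u; apply: depth_nrm_inl.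
by rewrite sum_nat_const leq_mul2r card_nrm_inl ?orbT.
Qed.

Lemma pi_inl_lt : size_at r <= ell ->
  \sum_(k | (inl k \in SP (G := I) (redirect psi r)) && ~~ constr_tg (G := I) (inl k))
    pj P ell (inl k : node I) < (1 + ell) ^ (2 * R) * (1 + D).
Proof.
move=> le_r; have [R0|R_gt0] := posnP R.
  rewrite big1 ?muln_gt0 ?expn_gt0 // => k /andP[/inst_inv_SP[lab_k rk _] _].
  by case lab_k': (lab k) lab_k => [f|] // _; have := rk_lt_rootL rk lab_k'; rewrite R0.
apply: (@leq_ltn_trans (\sum_(k in [set k | reach r k])
    (1 + ell) ^ (2 * R.-1) * (1 + ell * D))).
  rewrite big_mkcond [X in _ <= X]big_mkcond; apply: leq_sum => k _.
  case: ifP => // /andP[/inst_inv_SP inv_k _]; have [_ rk _] := inv_k.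
  rewrite inE rk; apply: leq_trans (pj_inl_le inv_k) _.
  by rewrite leq_mul2l leq_add2l leq_mul2r le_r !orbT.
rewrite sum_nat_const -(prednK R_gt0).
exact: leq_ltn_trans (leq_mul le_r (leqnn _)) (rank_gap_lt _ _ _).
Qed.

Lemma pi_inr_le :
  \sum_(g | (inr g \in SP (G := I) (redirect psi r)) && ~~ constr_tg (G := I) (inr g))
    pj P ell (inr g : node I) <=
  \sum_(g | (g \in SP rootL) && ~~ constr_tg g && (g != rootL)) pj P ell g.
Proof.
rewrite big_mkcond [X in _ <= X]big_mkcond; apply: leq_sum => g _.
case: ifP => // /andP[/inst_inv_SP[Cg|[SPg ne_g]] NCg].
  by rewrite constr_tg_inr in NCg.
have -> : ~~ constr_tg g by apply: contra NCg; apply: constr_tg_inr.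
by rewrite SPg ne_g pj_inr.
Qed.

Lemma pi_l_rootL : pi_l P ell rootL = (1 + ell) ^ (2 * R) * (1 + D) +
  \sum_(g | (g \in SP rootL) && ~~ constr_tg g && (g != rootL)) pj P ell g.
Proof.
rewrite /pi_l (bigD1 rootL) /=; last by rewrite inE connect0 rootL_not_constr.
by rewrite /pj /rk_at lab_rootL.
Qed.

Lemma pi_l_inst_lt : size_at r <= ell ->
  pi_l (G := I) P ell (redirect psi r) < pi_l P ell rootL.
Proof.
move=> le_r; rewrite pi_l_rootL /pi_l big_sumType /= -addSn.
exact: leq_add (pi_inl_lt le_r) pi_inr_le.
Qed.

End RootRewrite.

Theorem mainTheorem3 (S : signature) (P : precedence S)
  (K : lgraph S) (l r : node K)
  (GL : lgraph S) (rootL : node GL) (psi : node K -> node GL) (ell : nat) :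
  constructor_rule l r ->
  pt P r l ->
  term_graph rootL -> closed_at rootL -> tg_nrm rootL ->
  hom l psi -> psi l = rootL ->
  @tg_nrm S (inst psi) (redirect psi r) ->
  0 < ell -> size_at r <= ell ->
  @pi_l S (inst psi) P ell (redirect psi r) < pi_l P ell rootL.
Proof.
move=> [wfK [_ [_ basic_l]]] pt_rl [wfGL _] _ nrm_rootL hom_psi psi_l _ _ le_r.
exact: pi_l_inst_lt wfK wfGL basic_l hom_psi psi_l nrm_rootL pt_rl le_r.
Qed.
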